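(* Let $D$ be a crossing optimal normalized 2-page book drawing of $K_n$. For each integer $j$ with $0\le j\le\lfloor n/2\rfloor-2$, let $D_j$ be the drawing of $K_{n-j}$ obtained from $D$ by deleting the $j$ rightmost vertices $n-j+1,\dots,n$ and their incident edges. Then \[ E_{\le\le k}(D_j)=3\binom{k+3}3\quad\text{for all }0\le k\le\lfloor n/2\rfloor-2-j. \]
   Context: Normalized 2-page book drawing of $K_n$: vertices $(1,0),\dots,(n,0)$ labelled $1,\dots,n$; edges $i(i+1)$ on the spine; edge $1n$ in the upper half-plane; every other edge $ij$ a semicircle over $[i,j]$ in the upper or lower half-plane. Crossing optimal: exactly $Z(n)=\frac14\lfloor\frac n2\rfloor\lfloor\frac{n-1}2\rfloor\lfloor\frac{n-2}2\rfloor\lfloor\frac{n-3}2\rfloor$ crossings. For a good drawing $D$ of $K_m$: for distinct vertices $p,q,r$, $r$ is on the left (right) of $\overrightarrow{pq}$ if the triangle with edges $pq,qr,rp$ traced in order $p,q,r$ is counterclockwise (clockwise); an edge is a $k$-edge if exactly $k$ of the other $m-2$ vertices lie on one side of it; each edge has a unique such index in $\{0,\dots,\lfloor m/2\rfloor-1\}$, $E_k(D)$ counts edges with index $k$, and $E_{\le\le k}(D)=\sum_{i=0}^k(k+1-i)E_i(D)$. *)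

From mathcomp Require Import all_boot.
Set Implicit Arguments. Unset Strict Implicit. Unset Printing Implicit Defensive.

(* A normalized 2-page book drawing of K_n, vertices 1..n on the x-axis.
   [page a b] (for 1 <= a < b <= n, b - a >= 2) is [true] iff the semicircle
   edge ab lies in the UPPER half-plane, [false] iff in the lower one.
   Values of [page] at spine edges (b = a+1) or outside the range are
   irrelevant (never used).  Normalization: [page 1 n = true]. *)
Definition pages := nat -> nat -> bool.

(* Number of crossings: two semicircles cross iff they lie on the same page
   and their endpoints interleave a < c < b < d (spine edges and edge 1n
   never take part in such interleavings). *)
Definition cr (n : nat) (page : pages) : nat :=
  \sum_(1 <= a < n.+1) \sum_(a.+1 <= c < n.+1) \sum_(c.+1 <= b < n.+1)
    \sum_(b.+1 <= d < n.+1) nat_of_bool (page a b == page c d).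

Definition Z (n : nat) : nat :=
  (n./2 * (n.-1)./2 * (n - 2)./2 * (n - 3)./2) %/ 4.

(* The triangle's longest edge joins min and max of {p,q,r}; for a < b < c the
   traversal a -> b -> c is counterclockwise iff edge ac is in the upper page.
   Cyclic shifts preserve and reversals flip the orientation. *)
Definition ccw (page : pages) (p q r : nat) : bool :=
  let lo := minn p (minn q r) in
  let hi := maxn p (maxn q r) in
  let cyc := [|| (p < q < r), (q < r < p) | (r < p < q)] in
  cyc == page lo hi.

Definition on_left (page : pages) (p q r : nat) : bool := ccw page p q r.

Definition left_count (m : nat) (page : pages) (p q : nat) : nat :=
  \sum_(1 <= r < m.+1 | (r != p) && (r != q)) nat_of_bool (on_left page p q r).

Definition edge_index (m : nat) (page : pages) (p q : nat) : nat :=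
  minn (left_count m page p q) (m - 2 - left_count m page p q).

Definition E (m : nat) (page : pages) (i : nat) : nat :=
  \sum_(1 <= p < m.+1) \sum_(p.+1 <= q < m.+1)
     nat_of_bool (edge_index m page p q == i).

Definition Eleqleq (m : nat) (page : pages) (k : nat) : nat :=
  \sum_(0 <= i < k.+1) (k.+1 - i) * E m page i.

From mathcomp Require Import all_boot zify ring.
Set Implicit Arguments. Unset Strict Implicit. Unset Printing Implicit Defensive.

(* Write A_m(k) for the sum, over the edges of the drawing of K_m on the vertices
   1..m, of (k - index)^+, so that E_{<=<=k} = A_m(k+1).

   The left counts of the edges at a fixed vertex are pairwise
   distinct.  Hence, when a vertex m+1 is added to a drawing of K_m with
   m >= 2k+3, its m new edges contribute at least 2 C(k+2,2) to A_{m+1}(k+1); each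
   old edge contributes at least what it contributed to A_m(k), and the edges at
   the first k+1 vertices gain a further C(k+2,2) in total.  So
   A_m(k) + 3 C(k+2,2) <= A_{m+1}(k+1), and by induction A_m(k+1) >= 3 C(k+3,3)
   whenever m >= 2k+4.

   Among four vertices, the six (edge, pair of other vertices)
   incidences put the pair on the same side of the edge 3 + [crossing] times, so
   cr + 3 C(n,4) = sum over edges of C(i,2) + C(n-2-i,2), i the left count.  This
   is an affine combination of the A_n(k), k < n/2, with positive coefficients,
   and it equals Z(n) + 3 C(n,4) exactly at A_n(k) = 3 C(k+2,3).  Thus a crossing
   optimal drawing attains all the lower bounds, and the step inequality carries
   the equalities from D to the drawings D_j. *)

(** * Sums over ranges of naturals *)

Lemma leq_sum_nat m n (F G : nat -> nat) :
  (forall i, m <= i < n -> F i <= G i) ->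
  \sum_(m <= i < n) F i <= \sum_(m <= i < n) G i.
Proof.
move=> h; rewrite big_nat_cond [X in _ <= X]big_nat_cond.
by apply: leq_sum => i /andP[hi _]; apply: h.
Qed.

Lemma sum_bool_le a b (F : nat -> bool) : \sum_(a <= r < b) F r <= b - a.
Proof.
rewrite -[b - a]muln1 -sum_nat_const_nat; apply: leq_sum => i _; by case: (F i).
Qed.

Lemma bool_leq_nat (a b : bool) : (a -> b) -> (a : nat) <= b.
Proof. by case: a; case: b => // /(_ isT). Qed.

Lemma sum_leq_idx n x : x < n -> \sum_(0 <= v < n) (v <= x) = x.+1.
Proof.
elim: n => [|n IH] h //; rewrite big_nat_recr //=.
case: (ltngtP x n) => hx.
- by rewrite IH // addn0.
- lia.
- subst; rewrite addn1; congr _.+1.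
  rewrite -[RHS]muln1 -[X in X * 1](subn0 n) -sum_nat_const_nat.
  apply: eq_big_nat => i hi; rewrite (_ : (i <= n) = true) //; lia.
Qed.

Lemma sum_geq_idx n y : y <= n -> \sum_(0 <= v < n) (y <= v) = n - y.
Proof.
elim: n => [|n IH] h; first by rewrite big_geq //; lia.
rewrite big_nat_recr //=.
case: (leqP y n) => hy.
- rewrite IH //; lia.
- have -> : y = n.+1 by lia.
  rewrite subnn addn0; apply: big1_seq => i; rewrite mem_index_iota => /andP[_ hi].
  rewrite (_ : (n.+1 <= i) = false) //; lia.
Qed.

Lemma sum_subn_succ N i : \sum_(0 <= t < N) (t.+1 - i) = 'C(N.+1 - i, 2).
Proof.
elim: N => [|N IH]; first by rewrite big_geq //; case: i => [|[|i]].
rewrite big_nat_recr //= IH.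
case: (leqP i N.+1) => hi.
- rewrite (_ : N.+2 - i = (N.+1 - i).+1); last by lia.
  by rewrite binS bin1 addnC.
- by rewrite (_ : N.+2 - i = 0) 1?(_ : N.+1 - i = 0) //; lia.
Qed.

Lemma sum_subn_tri n k : k < n -> \sum_(0 <= v < n) (k.+1 - v) = 'C(k.+2, 2).
Proof.
move=> hk; rewrite big_nat_rev /= add0n.
rewrite (@eq_big_nat _ _ _ 0 n _ (fun v => v.+1 - (n - k.+1))); last by move=> v hv; lia.
by rewrite sum_subn_succ; congr 'C(_, 2); lia.
Qed.

Lemma sum_bin3 N : \sum_(0 <= t < N) 'C(t.+3, 3) = 'C(N.+3, 4).
Proof.
elim: N => [|N IH]; first by rewrite big_geq.
by rewrite big_nat_recr //= IH (binS N.+3 3).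
Qed.

Lemma sum_mul_eq N (F : nat -> nat) x :
  \sum_(0 <= i < N) F i * (x == i) = if x < N then F x else 0.
Proof.
elim: N => [|N IH]; first by rewrite big_geq.
rewrite big_nat_recr //= IH.
case: (ltngtP x N) => h /=.
- by rewrite muln0 addn0 (_ : x < N.+1) //; lia.
- by rewrite muln0 addn0 (_ : x < N.+1 = false) //; lia.
- by subst x; rewrite ltnSn muln1.
Qed.

Lemma eq_from_sum_leq N (f g : nat -> nat) : (forall t, t < N -> g t <= f t) ->
  \sum_(0 <= t < N) f t = \sum_(0 <= t < N) g t -> forall t, t < N -> f t = g t.
Proof.
elim: N => [|N IH] hle heq t ht //.
move: heq; rewrite !big_nat_recr //= => heq.
have hs : \sum_(0 <= t < N) g t <= \sum_(0 <= t < N) f t.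
  by apply: leq_sum_nat => i hi; apply: hle; lia.
have hN := hle N (ltnSn N).
case: (ltngtP t N) => htN.
- by apply: IH => //; [move=> i hi; apply: hle; lia | lia].
- lia.
- subst t; lia.
Qed.

Lemma sum_pairs_and n (y : nat -> bool) :
  \sum_(1 <= r < n.+1) \sum_(r.+1 <= s < n.+1) (y r && y s)
  = 'C(\sum_(1 <= r < n.+1) y r, 2).
Proof.
elim: n => [|n IH]; first by rewrite !big_geq.
rewrite (@big_nat_recr _ _ _ n.+1 1) //= (@big_geq _ _ _ n.+2 n.+2) // addn0.
rewrite (@eq_big_nat _ _ _ 1 n.+1 _ (fun r =>
   \sum_(r.+1 <= s < n.+1) (y r && y s) + (y r && y n.+1))); last first.
  by move=> r hr; rewrite big_nat_recr //=; lia.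
rewrite big_split /= IH [in RHS](@big_nat_recr _ _ _ n.+1 1) //=.
set Y := \sum_(1 <= r < n.+1) y r.
have -> : \sum_(1 <= i < n.+1) (y i && y n.+1) = y n.+1 * Y.
  rewrite /Y big_distrr /=; apply: eq_bigr => i _; by case: (y i); case: (y n.+1).
case: (y n.+1); rewrite /= ?mul1n ?mul0n ?addn0 //.
by rewrite addn1 binS bin1.
Qed.

Lemma sum_nat_eq1 n p : 1 <= p <= n -> \sum_(1 <= r < n.+1) (r == p) = 1.
Proof.
move=> hp; rewrite (@big_cat_nat _ _ _ p 1 n.+1) //=; [|lia|lia].
rewrite (@big_ltn _ _ _ p n.+1) //=; last by lia.
rewrite eqxx !big1_seq ?addn0 // => i; rewrite mem_index_iota => /andP[hi1 hi2];
  rewrite (_ : (i == p) = false) //; lia.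
Qed.

Lemma sum_nat_neq2 n p q : 1 <= p -> p < q -> q <= n ->
  \sum_(1 <= r < n.+1) ((r != p) && (r != q)) = n - 2.
Proof.
move=> h1 h2 h3.
have E : \sum_(1 <= r < n.+1) 1 = \sum_(1 <= r < n.+1) ((r != p) && (r != q))
   + \sum_(1 <= r < n.+1) (r == p) + \sum_(1 <= r < n.+1) (r == q).
  rewrite -!big_split; apply: eq_bigr => r _ /=.
  case: (eqVneq r p) => [->|hrp]; case: (eqVneq r q) => [hrq|hrq] //=; lia.
move: E; rewrite !sum_nat_eq1 ?sum_nat_const_nat; lia.
Qed.

Lemma bin2_mul2 x : 'C(x, 2) * 2 = x * x.-1.
Proof.
elim: x => [|x IH] //.
by rewrite binS bin1 mulnDl IH; case: x {IH} => //= x; lia.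
Qed.

Lemma bin3_mul6 x : 'C(x, 3) * 6 = x * (x - 1) * (x - 2).
Proof. have := bin_ffact x 3; rewrite !ffactnS ffactn0 => ->; lia. Qed.

Lemma bin4_mul24 x : 'C(x, 4) * 24 = x * (x - 1) * (x - 2) * (x - 3).
Proof. have := bin_ffact x 4; rewrite !ffactnS ffactn0 => ->; lia. Qed.

(* Both maps below send [s, s + n) bijectively onto [0, n), which is stated as
   invariance of sums.  They are the shapes of the left counts of the edges at a
   fixed vertex. *)
Lemma sum_rank_suffix (b : nat -> bool) s n (h : nat -> nat) :
  \sum_(s <= q < s + n) h (\sum_(q.+1 <= r < s + n) b r + (q - s) * ~~ b q)
  = \sum_(0 <= v < n) h v.
Proof.
elim: n h => [|n IH] h; first by rewrite addn0 !big_geq.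
rewrite addnS big_nat_recr ?leq_addr //=.
rewrite (@big_geq _ _ _ (s+n).+1 (s+n).+1) // add0n; have -> : s + n - s = n by lia.
have -> : \sum_(s <= q < s + n)
     h (\sum_(q.+1 <= r < (s + n).+1) b r + (q - s) * ~~ b q)
   = \sum_(s <= q < s + n)
     h (b (s + n) + (\sum_(q.+1 <= r < s + n) b r + (q - s) * ~~ b q)).
  apply: eq_big_nat => q /andP[_ hq]; rewrite big_nat_recr //=; congr h; lia.
case: (b (s + n)) => /=.
- by rewrite (IH (fun v => h v.+1)) big_nat_recl //= muln0 addnC.
- by rewrite IH big_nat_recr //= muln1.
Qed.

Lemma sum_rank_prefix (b : nat -> bool) n : forall s (h : nat -> nat),
  \sum_(s <= p < s + n) h (\sum_(s <= r < p) b r + (s + n - p.+1) * ~~ b p)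
  = \sum_(0 <= v < n) h v.
Proof.
elim: n => [|n IH] s h; first by rewrite addn0 !big_geq.
rewrite big_ltn ?addnS ?ltnS ?leq_addr //.
rewrite (@big_geq _ _ _ s s) // add0n.
have -> : (s + n).+1 - s.+1 = n by lia.
have -> : \sum_(s.+1 <= p < (s + n).+1)
    h (\sum_(s <= r < p) b r + ((s + n).+1 - p.+1) * ~~ b p)
  = \sum_(s.+1 <= p < s.+1 + n)
    h (b s + (\sum_(s.+1 <= r < p) b r + (s.+1 + n - p.+1) * ~~ b p)).
  rewrite addSn; apply: eq_big_nat => p /andP[hp _].
  rewrite (big_ltn hp); congr h; lia.
case: (b s) => /=.
- by rewrite (IH _ (fun v => h v.+1)) big_nat_recl //= muln0.
- under eq_big_nat do rewrite add0n.
  by rewrite IH big_nat_recr //= muln1 addnC.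
Qed.

(** * Sums over the edges and over the 4-sets of vertices *)

Definition sum_edges (m : nat) (F : nat -> nat -> nat) : nat :=
  \sum_(1 <= p < m.+1) \sum_(p.+1 <= q < m.+1) F p q.

Lemma eq_sum_edges m F G :
  (forall p q, 1 <= p -> p < q -> q <= m -> F p q = G p q) ->
  sum_edges m F = sum_edges m G.
Proof.
move=> h; apply: eq_big_nat => p hp; apply: eq_big_nat => q hq; apply: h; lia.
Qed.

Lemma sum_edgesD m F G :
  sum_edges m (fun p q => F p q + G p q) = sum_edges m F + sum_edges m G.
Proof. rewrite /sum_edges -big_split; apply: eq_bigr => p _; exact: big_split. Qed.

Lemma sum_edgesZ m c F : sum_edges m (fun p q => c * F p q) = c * sum_edges m F.
Proof. by rewrite /sum_edges big_distrr; apply: eq_bigr => p _; rewrite big_distrr. Qed.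

Lemma sum_edges1 m : sum_edges m (fun _ _ => 1) = 'C(m, 2).
Proof.
by have := sum_pairs_and m (fun _ => true); rewrite sum_nat_const_nat subn1 muln1 => <-.
Qed.

Lemma sum_edges_const m c : sum_edges m (fun _ _ => c) = c * 'C(m, 2).
Proof. by rewrite -sum_edges1 -sum_edgesZ; apply: eq_sum_edges => p q *; rewrite muln1. Qed.

Lemma exchange_sum_edges m N G :
  sum_edges m (fun p q => \sum_(0 <= t < N) G t p q) =
  \sum_(0 <= t < N) sum_edges m (G t).
Proof.
rewrite /sum_edges [RHS]exchange_big_nat; apply: eq_bigr => p _.
exact: exchange_big_nat.
Qed.

Definition sum_quads (n : nat) (F : nat -> nat -> nat -> nat -> nat) : nat :=
  \sum_(1 <= a < n.+1) \sum_(a.+1 <= b < n.+1) \sum_(b.+1 <= c < n.+1)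
    \sum_(c.+1 <= d < n.+1) F a b c d.

Lemma eq_sum_quads n F G :
  (forall a b c d, 1 <= a -> a < b -> b < c -> c < d -> d <= n ->
     F a b c d = G a b c d) ->
  sum_quads n F = sum_quads n G.
Proof.
move=> h; apply: eq_big_nat => a ha; apply: eq_big_nat => b hb;
apply: eq_big_nat => c hc; apply: eq_big_nat => d hd; apply: h; lia.
Qed.

Lemma sum_quadsD n F G :
  sum_quads n (fun a b c d => F a b c d + G a b c d) = sum_quads n F + sum_quads n G.
Proof.
rewrite /sum_quads -big_split; apply: eq_bigr => a _; rewrite -big_split;
apply: eq_bigr => b _; rewrite -big_split; apply: eq_bigr => c _; exact: big_split.
Qed.

Lemma sum_quadsZ n k F : sum_quads n (fun a b c d => k * F a b c d) = k * sum_quads n F.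
Proof.
by rewrite /sum_quads big_distrr; apply: eq_bigr => a _; rewrite big_distrr;
apply: eq_bigr => b _; rewrite big_distrr; apply: eq_bigr => c _; rewrite big_distrr.
Qed.

Definition sum_tuples4 n (G : nat -> nat -> nat -> nat -> nat) :=
  \sum_(1 <= a < n.+1) \sum_(1 <= b < n.+1) \sum_(1 <= c < n.+1)
    \sum_(1 <= d < n.+1) G a b c d.

Lemma eq_sum_tuples4 n G1 G2 :
  (forall a b c d, G1 a b c d = G2 a b c d) -> sum_tuples4 n G1 = sum_tuples4 n G2.
Proof.
move=> h; apply: eq_bigr => a _; apply: eq_bigr => b _;
apply: eq_bigr => c _; apply: eq_bigr => d _; exact: h.
Qed.

Lemma sum_tuples4D n G1 G2 :
  sum_tuples4 n (fun a b c d => G1 a b c d + G2 a b c d) =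
  sum_tuples4 n G1 + sum_tuples4 n G2.
Proof.
rewrite /sum_tuples4 -big_split; apply: eq_bigr => a _; rewrite -big_split;
apply: eq_bigr => b _; rewrite -big_split; apply: eq_bigr => c _; exact: big_split.
Qed.

Lemma sum_tuples4_swap12 n G : sum_tuples4 n G = sum_tuples4 n (fun a b c d => G b a c d).
Proof. exact: exchange_big_nat. Qed.

Lemma sum_tuples4_swap23 n G : sum_tuples4 n G = sum_tuples4 n (fun a b c d => G a c b d).
Proof. by apply: eq_bigr => a _; rewrite exchange_big_nat. Qed.

Lemma sum_tuples4_swap34 n G : sum_tuples4 n G = sum_tuples4 n (fun a b c d => G a b d c).
Proof. by apply: eq_bigr => a _; apply: eq_bigr => b _; rewrite exchange_big_nat. Qed.

Lemma sum_gt_nat x n (G : nat -> nat) :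
  \sum_(x.+1 <= y < n.+1) G y = \sum_(1 <= y < n.+1) (x < y) * G y.
Proof.
rewrite (@big_nat_widenl _ _ _ x.+1 1) // big_mkcond /=.
by apply: eq_bigr => y _; case: (x < y); rewrite ?mul1n ?mul0n.
Qed.

Lemma sum_quadsE n F :
  sum_quads n F = sum_tuples4 n (fun a b c d => [&& a < b, b < c & c < d] * F a b c d).
Proof.
apply: eq_bigr => a _; rewrite sum_gt_nat; apply: eq_bigr => b _.
rewrite sum_gt_nat big_distrr; apply: eq_bigr => c _.
rewrite sum_gt_nat !big_distrr; apply: eq_bigr => d _ /=.
by case: (a < b); case: (b < c); case: (c < d); rewrite /= ?mul0n ?mul1n.
Qed.

Lemma disjoint_pairs_orders p q r s :
  nat_of_bool ((p < q) && (r < s) && (r != p) && (r != q) && (s != p) && (s != q))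
  = [&& p < q, q < r & r < s] + [&& p < r, r < q & q < s] + [&& p < r, r < s & s < q]
    + [&& r < p, p < q & q < s] + [&& r < p, p < s & s < q] + [&& r < s, s < p & p < q].
Proof.
case: (ltngtP p q) => ?; case: (ltngtP p r) => ?; case: (ltngtP p s) => ?;
case: (ltngtP q r) => ?; case: (ltngtP q s) => ?; case: (ltngtP r s) => ? /=; lia.
Qed.

Lemma sum_disjoint_edge_pairs n F :
  sum_edges n (fun p q => sum_edges n (fun r s =>
     ((r != p) && (r != q) && (s != p) && (s != q)) * F p q r s))
  = sum_quads n (fun a b c d =>
      F a b c d + F a c b d + F a d b c + F b c a d + F b d a c + F c d a b).
Proof.
have -> : sum_edges n (fun p q => sum_edges n (fun r s =>
     ((r != p) && (r != q) && (s != p) && (s != q)) * F p q r s))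
  = sum_tuples4 n (fun p q r s =>
     ((p < q) && (r < s) && (r != p) && (r != q) && (s != p) && (s != q)) * F p q r s).
  apply: eq_bigr => p _; rewrite sum_gt_nat; apply: eq_bigr => q _.
  rewrite big_distrr; apply: eq_bigr => r _.
  rewrite sum_gt_nat !big_distrr; apply: eq_bigr => s _ /=.
  by case: (p < q); case: (r < s); rewrite /= ?mul0n ?mul1n ?andbF.
rewrite sum_quadsE.
set T := fun a b c d => [&& a < b, b < c & c < d].
rewrite [in RHS](@eq_sum_tuples4 n _ (fun a b c d =>
   T a b c d * F a b c d + T a b c d * F a c b d + T a b c d * F a d b c +
   T a b c d * F b c a d + T a b c d * F b d a c + T a b c d * F c d a b));
  last by move=> a b c d; rewrite !mulnDr.
rewrite [in LHS](@eq_sum_tuples4 n _ (fun p q r s =>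
   [&& p < q, q < r & r < s] * F p q r s + [&& p < r, r < q & q < s] * F p q r s
   + [&& p < r, r < s & s < q] * F p q r s + [&& r < p, p < q & q < s] * F p q r s
   + [&& r < p, p < s & s < q] * F p q r s + [&& r < s, s < p & p < q] * F p q r s));
  last by move=> p q r s; rewrite disjoint_pairs_orders !mulnDl.
rewrite !sum_tuples4D /T.
congr (_ + _ + _ + _ + _ + _).
- by rewrite [RHS]sum_tuples4_swap23.
- by rewrite [RHS]sum_tuples4_swap34 [RHS]sum_tuples4_swap23.
- by rewrite [RHS]sum_tuples4_swap12 [RHS]sum_tuples4_swap23.
- by rewrite [RHS]sum_tuples4_swap12 [RHS]sum_tuples4_swap34 [RHS]sum_tuples4_swap23.
- by rewrite [RHS]sum_tuples4_swap23 [RHS]sum_tuples4_swap12 [RHS]sum_tuples4_swap34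
    [RHS]sum_tuples4_swap23.
Qed.

Lemma sum_quads1 n : 6 * sum_quads n (fun _ _ _ _ => 1) = 'C(n, 2) * 'C(n - 2, 2).
Proof.
rewrite -sum_quadsZ -(sum_disjoint_edge_pairs n (fun _ _ _ _ => 1)) mulnC -sum_edges_const.
apply: eq_sum_edges => p q hp hpq hq; rewrite -(sum_nat_neq2 hp hpq hq) -sum_pairs_and.
by apply: eq_bigr => r _; apply: eq_bigr => s _; rewrite muln1 !andbA.
Qed.

(** * Orientation and left counts *)

Section LeftCount.
Variable page : pages.

Lemma ccwE p q r lo hi cyc :
  minn p (minn q r) = lo -> maxn p (maxn q r) = hi ->
  [|| (p < q < r), (q < r < p) | (r < p < q)] = cyc ->
  ccw page p q r = (cyc == page lo hi).
Proof. by rewrite /ccw => -> -> ->. Qed.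

Lemma ccw_xyz x y z : x < y < z -> ccw page x y z = page x z.
Proof. by move=> h; rewrite (@ccwE _ _ _ x z true) ?eqb_id //; lia. Qed.

Lemma ccw_yzx x y z : x < y < z -> ccw page y z x = page x z.
Proof. by move=> h; rewrite (@ccwE _ _ _ x z true) ?eqb_id //; lia. Qed.

Lemma ccw_xzy x y z : x < y < z -> ccw page x z y = ~~ page x z.
Proof. by move=> h; rewrite (@ccwE _ _ _ x z false) ?eqbF_neg //; lia. Qed.

Variables (m p q : nat).
Hypotheses (p_gt0 : 0 < p) (p_lt_q : p < q) (q_le_m : q <= m).

Lemma left_countE :
  left_count m page p q =
  \sum_(1 <= r < p) page r q + (q - p.+1) * ~~ page p q + \sum_(q.+1 <= r < m.+1) page p r.
Proof.
rewrite /left_count big_mkcond /=.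
rewrite (@big_cat_nat _ _ _ p 1 m.+1) ?(@big_ltn _ _ _ p m.+1); try lia.
rewrite (@big_cat_nat _ _ _ q p.+1 m.+1) ?(@big_ltn _ _ _ q m.+1); try lia.
rewrite !eqxx !andbF /= !add0n addnA.
rewrite (@eq_big_nat _ _ _ 1 p _ (fun r => nat_of_bool (page r q))); last first.
  by move=> r hr; rewrite ifT ?/on_left ?ccw_yzx //; lia.
rewrite (@eq_big_nat _ _ _ p.+1 q _ (fun r => nat_of_bool (~~ page p q))); last first.
  by move=> r hr; rewrite ifT ?/on_left ?ccw_xzy //; lia.
rewrite (@eq_big_nat _ _ _ q.+1 m.+1 _ (fun r => nat_of_bool (page p r))); last first.
  by move=> r hr; rewrite ifT ?/on_left ?ccw_xyz //; lia.
by rewrite sum_nat_const_nat.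
Qed.

Lemma left_count_le : left_count m page p q <= m - 2.
Proof.
rewrite left_countE.
have := sum_bool_le 1 p (fun r => page r q).
have := sum_bool_le q.+1 m.+1 (fun r => page p r).
case: (page p q) => /=; lia.
Qed.

Lemma edge_index_le_half : edge_index m page p q <= (m - 2)./2.
Proof. by rewrite /edge_index; have := left_count_le; lia. Qed.

End LeftCount.

Lemma left_countS page m p q : 0 < p -> p < q -> q <= m ->
  left_count m.+1 page p q = left_count m page p q + page p m.+1.
Proof.
move=> hp hpq hq; rewrite !left_countE //; last by lia.
by rewrite big_nat_recr /=; lia.
Qed.

(** * The lower bound *)

(* The A_m(k) above: truncated subtraction keeps only the edges of index < k. *)
Definition Etrunc (m : nat) (page : pages) (k : nat) : nat :=
  sum_edges m (fun p q => k - edge_index m page p q).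

Lemma EleqleqE m page k : Eleqleq m page k = Etrunc m page k.+1.
Proof.
rewrite /Eleqleq (eq_bigr (fun i => sum_edges m (fun p q =>
  (k.+1 - i) * (edge_index m page p q == i)))) => [|i _]; last by rewrite sum_edgesZ.
rewrite -exchange_sum_edges; apply: eq_sum_edges => p q *.
by rewrite sum_mul_eq; case: ifP => //; lia.
Qed.

Section LowerBound.
Variables (page : pages) (M k : nat).
Hypothesis M_large : 2 * k + 4 <= M.+1.

(* Adding the vertex M.+1 puts it on the left of pq iff [page p M.+1]; the
   contribution of pq then grows by one iff the other side has at most k
   vertices (for M > 2k + 2 at most one side is that small). *)
Definition side_gain p q : nat :=
  if page p M.+1 then M - 2 - left_count M page p q <= k
  else left_count M page p q <= k.

Lemma Etrunc_edgeS p q : 0 < p -> p < q -> q <= M ->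
  k.+1 - edge_index M.+1 page p q = (k - edge_index M page p q) + side_gain p q.
Proof.
move=> hp hpq hq; rewrite /edge_index /side_gain left_countS //.
have := left_count_le page hp hpq hq.
by case: (page p M.+1) => /=; case: leqP => /=; lia.
Qed.

Lemma EtruncS : Etrunc M.+1 page k.+1 =
  Etrunc M page k + sum_edges M side_gain
  + \sum_(1 <= p < M.+1) (k.+1 - edge_index M.+1 page p M.+1).
Proof.
rewrite -sum_edgesD /Etrunc /sum_edges (@big_nat_recr _ _ _ M.+1 1) //=.
rewrite [X in _ + X = _]big_geq // addn0 (@eq_big_nat _ _ _ 1 M.+1 _ (fun p =>
  \sum_(p.+1 <= q < M.+1) (k - edge_index M page p q + side_gain p q)
  + (k.+1 - edge_index M.+1 page p M.+1))); first by rewrite big_split.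
move=> p hp; rewrite big_nat_recr /=; last by lia.
by congr (_ + _); apply: eq_big_nat => q hq; apply: Etrunc_edgeS; lia.
Qed.

Lemma new_edges_bound : 'C(k.+2, 2) + 'C(k.+2, 2) <=
  \sum_(1 <= p < M.+1) (k.+1 - edge_index M.+1 page p M.+1).
Proof.
pose h v := k.+1 - minn v (M.+1 - 2 - v).
have := sum_rank_prefix (fun r => page r M.+1) M 1 h; rewrite add1n => rank.
rewrite (@eq_big_nat _ _ _ 1 M.+1 _ (fun p =>
  h (\sum_(1 <= r < p) page r M.+1 + (M.+1 - p.+1) * ~~ page p M.+1))); last first.
  move=> p hp; rewrite /edge_index left_countE; try lia.
  by rewrite (@big_geq _ _ _ M.+2 M.+2) // addn0.
rewrite rank; apply: (@leq_trans (\sum_(0 <= v < M) ((k.+1 - v) + (k.+1 - (M - 1 - v))))).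
  rewrite big_split /= sum_subn_tri; last by lia.
  rewrite big_nat_rev /= add0n.
  rewrite (@eq_big_nat _ _ _ 0 M _ (fun v => k.+1 - v)) ?sum_subn_tri //; first by lia.
  by move=> i hi; congr (_ - _); lia.
by apply: leq_sum_nat => v hv; rewrite /h; lia.
Qed.

Lemma side_gain_at p : 1 <= p <= k.+1 ->
  k.+2 - p <= \sum_(p.+1 <= q < M.+1) side_gain p q.
Proof.
move=> hp.
have rank h := sum_rank_suffix (fun r => page p r) p.+1 (M - p) h.
rewrite (_ : p.+1 + (M - p) = M.+1) in rank; last by lia.
have lcE q : p.+1 <= q < M.+1 -> left_count M page p q =
   \sum_(1 <= r < p) page r q + (\sum_(q.+1 <= r < M.+1) page p r + (q - p.+1) * ~~ page p q).
  by move=> hq; rewrite left_countE; lia.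
have head q : \sum_(1 <= r < p) page r q <= p - 1 := sum_bool_le 1 p _.
rewrite /side_gain; case: (page p M.+1).
- have := rank (fun v => nat_of_bool (M - 2 - k <= v)).
  rewrite sum_geq_idx; last by lia.
  rewrite (_ : M - p - (M - 2 - k) = k.+2 - p); last by lia.
  move=> <-; apply: leq_sum_nat => q hq; rewrite lcE //.
  by apply: bool_leq_nat; lia.
- have := rank (fun v => nat_of_bool (v <= k.+1 - p)).
  rewrite sum_leq_idx; last by lia.
  rewrite (_ : (k.+1 - p).+1 = k.+2 - p); last by lia.
  move=> <-; apply: leq_sum_nat => q hq; rewrite lcE //.
  by apply: bool_leq_nat; have := head q; lia.
Qed.

Lemma side_gain_bound : 'C(k.+2, 2) <= sum_edges M side_gain.
Proof.
rewrite /sum_edges (@big_cat_nat _ _ _ k.+2 1 M.+1) /=; [|lia|lia].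
apply: leq_trans (leq_addr _ _).
have <- : \sum_(1 <= p < k.+2) (k.+2 - p) = 'C(k.+2, 2).
  by rewrite big_add1 -(@sum_subn_tri k.+1 k) //; apply: eq_bigr => i _; rewrite subSS.
by apply: leq_sum_nat => p hp; apply: side_gain_at; lia.
Qed.

Lemma Etrunc_step : Etrunc M page k + 3 * 'C(k.+2, 2) <= Etrunc M.+1 page k.+1.
Proof.
rewrite EtruncS; have := new_edges_bound; have := side_gain_bound; lia.
Qed.

End LowerBound.

Lemma Etrunc_lower_bound page k m : 2 * k + 4 <= m -> 3 * 'C(k.+3, 3) <= Etrunc m page k.+1.
Proof.
elim: k m => [|k IH] [|M] hm //.
- by have := Etrunc_step page hm; rewrite !binn; lia.
- have := IH M ltac:(lia); have := @Etrunc_step page M k.+1 ltac:(lia).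
  by rewrite (binS k.+3 2); lia.
Qed.

(** * Counting same-side pairs *)

Lemma sum_same_side_pairs page n p q : 0 < p -> p < q -> q <= n ->
  sum_edges n (fun r s => ((r != p) && (r != q) && (s != p) && (s != q)) *
                          (on_left page p q r == on_left page p q s))
  = 'C(left_count n page p q, 2) + 'C(n - 2 - left_count n page p q, 2).
Proof.
move=> hp hpq hq.
pose P r := (r != p) && (r != q).
pose x r := on_left page p q r.
have -> : sum_edges n (fun r s => ((r != p) && (r != q) && (s != p) && (s != q)) * (x r == x s))
   = sum_edges n (fun r s => (P r && x r) && (P s && x s))
   + sum_edges n (fun r s => (P r && ~~ x r) && (P s && ~~ x s)).
  rewrite -sum_edgesD; apply: eq_sum_edges => r s _ _ _ /=; rewrite /P.
  by case: (r != p); case: (r != q); case: (s != p); case: (s != q); case: (x r); case: (x s).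
rewrite /sum_edges !sum_pairs_and.
have left : \sum_(1 <= r < n.+1) (P r && x r) = left_count n page p q.
  rewrite /left_count [RHS]big_mkcond /=; apply: eq_bigr => r _; rewrite /P /x.
  by case: ((r != p) && (r != q)).
have right : \sum_(1 <= r < n.+1) (P r && ~~ x r) = n - 2 - left_count n page p q.
  rewrite -left -(sum_nat_neq2 hp hpq hq).
  have -> : \sum_(1 <= r < n.+1) ((r != p) && (r != q)) =
    \sum_(1 <= r < n.+1) (P r && x r) + \sum_(1 <= r < n.+1) (P r && ~~ x r).
    by rewrite -big_split; apply: eq_bigr => r _ /=; rewrite /P; case: (_ && _); case: (x r).
  lia.
by rewrite left right.
Qed.

(* [page a c == page b d] says that ac and bd cross. *)
Lemma K4_same_side_pairs page a b c d : a < b -> b < c -> c < d ->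
  nat_of_bool (on_left page a b c == on_left page a b d)
  + nat_of_bool (on_left page a c b == on_left page a c d)
  + nat_of_bool (on_left page a d b == on_left page a d c)
  + nat_of_bool (on_left page b c a == on_left page b c d)
  + nat_of_bool (on_left page b d a == on_left page b d c)
  + nat_of_bool (on_left page c d a == on_left page c d b)
  = 3 + (page a c == page b d).
Proof.
move=> hab hbc hcd.
have abc : a < b < c by lia. have abd : a < b < d by lia.
have acd : a < c < d by lia. have bcd : b < c < d by lia.
rewrite /on_left (ccw_xyz _ abc) (ccw_xyz _ abd) (ccw_xzy _ abc) (ccw_xyz _ acd).
rewrite (ccw_xzy _ abd) (ccw_xzy _ acd) (ccw_yzx _ abc) (ccw_xyz _ bcd).
rewrite (ccw_yzx _ abd) (ccw_xzy _ bcd) (ccw_yzx _ acd) (ccw_yzx _ bcd).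
by case: (page a c); case: (page a d); case: (page b d).
Qed.

Lemma cr_same_side_pairs page n :
  cr n page + 3 * sum_quads n (fun _ _ _ _ => 1) =
  sum_edges n (fun p q =>
    'C(left_count n page p q, 2) + 'C(n - 2 - left_count n page p q, 2)).
Proof.
rewrite (@eq_sum_edges n _ (fun p q => sum_edges n (fun r s =>
   ((r != p) && (r != q) && (s != p) && (s != q)) *
   (on_left page p q r == on_left page p q s)))); last first.
  by move=> p q hp hpq hq; rewrite sum_same_side_pairs.
rewrite sum_disjoint_edge_pairs [RHS](@eq_sum_quads n _
  (fun a b c d => 1 + 1 + 1 + (page a c == page b d))); last first.
  by move=> a b c d _ hab hbc hcd _ /=; rewrite K4_same_side_pairs //; lia.
have -> : cr n page = sum_quads n (fun a b c d => page a c == page b d) by [].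
by rewrite !sum_quadsD; lia.
Qed.

(** * Crossing optimal drawings *)

Lemma Z_add_quads n M : 1 <= M -> 2 * M + 2 <= n <= 2 * M + 3 ->
  Z n + 3 * sum_quads n (fun _ _ _ _ => 1) =
  'C(n, 2) * ('C(M, 2) + 'C(n - 2 - M, 2)) + 2 * (3 * 'C(M + 2, 4))
  + (n - 2 * M - 1) * (3 * 'C(M + 2, 3)).
Proof.
move=> hM hn; have := sum_quads1 n; move: (sum_quads _ _) => Q hQ.
have [s hs] : exists s, M = s.+1 by exists M.-1; lia.
subst M.
have [e [he hne]] : exists e, e <= 1 /\ n = 2 * s + 4 + e by exists (n - 2 * s - 4); lia.
subst n; clear hn hM.
have hZ : Z (2 * s + 4 + e) * 4 = (s + 2) * (s + 1 + e) * (s + 1) * (s + e).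
  rewrite /Z (_ : (2 * s + 4 + e)./2 = s + 2); last by lia.
  rewrite (_ : (2 * s + 4 + e).-1./2 = s + 1 + e); last by lia.
  rewrite (_ : (2 * s + 4 + e - 2)./2 = s + 1); last by lia.
  rewrite (_ : (2 * s + 4 + e - 3)./2 = s + e); last by lia.
  clear hQ; case: e he => [|[|//]] _.
  - rewrite (_ : (s + 2) * (s + 1 + 0) * (s + 1) * (s + 0) =
                 4 * ('C(s + 2, 2) * 'C(s + 1, 2))); first by rewrite mulKn // mulnC.
    by have := bin2_mul2 (s + 2); have := bin2_mul2 (s + 1); nia.
  - rewrite (_ : (s + 2) * (s + 1 + 1) * (s + 1) * (s + 1) =
                 4 * ('C(s + 2, 2) * 'C(s + 2, 2))); first by rewrite mulKn // mulnC.
    by have := bin2_mul2 (s + 2); nia.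
rewrite (_ : 2 * s + 4 + e - 2 - s.+1 = s + 1 + e); last by lia.
rewrite (_ : 2 * s + 4 + e - 2 * s.+1 - 1 = e + 1); last by lia.
rewrite (_ : 2 * s + 4 + e - 2 = 2 * s + 2 + e) in hQ; last by lia.
have h1 : 'C(2 * s + 4 + e, 2) * 2 = (2 * s + 4 + e) * (2 * s + 3 + e).
  by rewrite bin2_mul2; congr (_ * _); lia.
have h2 : 'C(2 * s + 2 + e, 2) * 2 = (2 * s + 2 + e) * (2 * s + 1 + e).
  by rewrite bin2_mul2; congr (_ * _); lia.
have h3 : 'C(s.+1, 2) * 2 = (s + 1) * s.
  by rewrite bin2_mul2; congr (_ * _); lia.
have h4 : 'C(s + 1 + e, 2) * 2 = (s + 1 + e) * (s + e).
  by rewrite bin2_mul2; congr (_ * _); lia.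
have h5 : 'C(s.+1 + 2, 4) * 24 = (s + 3) * (s + 2) * (s + 1) * s.
  by rewrite bin4_mul24; congr (_ * _ * _ * _); lia.
have h6 : 'C(s.+1 + 2, 3) * 6 = (s + 3) * (s + 2) * (s + 1).
  by rewrite bin3_mul6; congr (_ * _ * _); lia.
move: hZ hQ h1 h2 h3 h4 h5 h6.
move: (Z _) ('C(2 * s + 4 + e, 2)) ('C(2 * s + 2 + e, 2)) ('C(s.+1, 2)) ('C(s + 1 + e, 2))
  ('C(s.+1 + 2, 4)) ('C(s.+1 + 2, 3)) => z b1 b2 b3 b4 b5 b6 hZ hQ h1 h2 h3 h4 h5 h6.
apply/eqP; rewrite -(eqn_pmul2l (_ : 0 < 24)) //; apply/eqP.
have -> : 24 * (z + 3 * Q) = 6 * (z * 4) + 3 * ((b1 * 2) * (b2 * 2)).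
  have -> : 3 * ((b1 * 2) * (b2 * 2)) = 12 * (b1 * b2) by ring.
  by rewrite -hQ; ring.
have -> : 24 * (b1 * (b3 + b4) + 2 * (3 * b5) + (e + 1) * (3 * b6)) =
  6 * ((b1 * 2) * (b3 * 2)) + 6 * ((b1 * 2) * (b4 * 2)) + 6 * (b5 * 24)
  + 12 * (e + 1) * (b6 * 6) by ring.
rewrite hZ h1 h2 h3 h4 h5 h6.
by case: e he {hZ h1 h2 h4} => [|[|//]] _; ring.
Qed.

(* For an edge of index i <= M, where M = n/2 - 1, expand its weight around M:
   the correction terms are C(M - i, 2) = sum_{t < M-1} (t+1 - i)^+ and M - i. *)
Lemma bin2_sides_index n M i : i <= M -> 2 * M + 2 <= n <= 2 * M + 3 ->
  'C(i, 2) + 'C(n - 2 - i, 2) =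
  'C(M, 2) + 'C(n - 2 - M, 2) + 2 * 'C(M - i, 2) + (n - 2 * M - 1) * (M - i).
Proof.
move=> hi hn.
have h1 := bin2_mul2 i. have h2 := bin2_mul2 (n - 2 - i). have h3 := bin2_mul2 M.
have h4 := bin2_mul2 (n - 2 - M). have h5 := bin2_mul2 (M - i).
have [j hj] : exists j, M = i + j by exists (M - i); lia.
subst M.
have [e [he hne]] : exists e, e <= 1 /\ n = 2 * (i + j) + 2 + e.
  by exists (n - 2 * (i + j) - 2); lia.
subst n; move: h1 h2 h3 h4 h5.
rewrite (_ : 2 * (i + j) + 2 + e - 2 - i = i + 2 * j + e); last by lia.
rewrite (_ : 2 * (i + j) + 2 + e - 2 - (i + j) = i + j + e); last by lia.
rewrite (_ : i + j - i = j); last by lia.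
rewrite (_ : 2 * (i + j) + 2 + e - 2 * (i + j) - 1 = e.+1); last by lia.
move: ('C(i, 2)) ('C(i + 2 * j + e, 2)) ('C(i + j, 2)) ('C(i + j + e, 2)) ('C(j, 2)).
move=> b1 b2 b3 b4 b5; clear hn hi.
by case: e he => [|[|//]] _; case: i => [|i]; case: j => [|j] /=; nia.
Qed.

Lemma sum_side_pairs_Etrunc page n M : 1 <= M -> 2 * M + 2 <= n <= 2 * M + 3 ->
  sum_edges n (fun p q =>
    'C(left_count n page p q, 2) + 'C(n - 2 - left_count n page p q, 2))
  = 'C(n, 2) * ('C(M, 2) + 'C(n - 2 - M, 2))
    + 2 * \sum_(0 <= t < M.-1) Etrunc n page t.+1 + (n - 2 * M - 1) * Etrunc n page M.
Proof.
move=> hM hn.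
rewrite (@eq_sum_edges n _ (fun p q => ('C(M, 2) + 'C(n - 2 - M, 2))
   + 2 * \sum_(0 <= t < M.-1) (t.+1 - edge_index n page p q)
   + (n - 2 * M - 1) * (M - edge_index n page p q))); last first.
  move=> p q hp hpq hq; rewrite sum_subn_succ prednK // -bin2_sides_index //; last first.
    by have := edge_index_le_half page hp hpq hq; lia.
  rewrite /edge_index /minn; have := left_count_le page hp hpq hq.
  by case: ltnP => // _ hle; rewrite addnC; congr (_ + 'C(_, 2)); lia.
by rewrite 2!sum_edgesD sum_edges_const !sum_edgesZ exchange_sum_edges mulnC.
Qed.

Lemma Etrunc_sum_optimal page n M : 1 <= M -> 2 * M + 2 <= n <= 2 * M + 3 ->
  cr n page = Z n ->
  2 * \sum_(0 <= t < M.-1) Etrunc n page t.+1 + (n - 2 * M - 1) * Etrunc n page M =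
  2 * \sum_(0 <= t < M.-1) 3 * 'C(t.+3, 3) + (n - 2 * M - 1) * (3 * 'C(M + 2, 3)).
Proof.
move=> hM hn hcr; have := cr_same_side_pairs page n.
rewrite (sum_side_pairs_Etrunc _ hM hn) hcr (Z_add_quads hM hn) -big_distrr /= sum_bin3.
by rewrite (_ : M.-1.+3 = M + 2); lia.
Qed.

Lemma Etrunc_optimal page n t : cr n page = Z n -> t.+2 <= n./2 ->
  Etrunc n page t.+1 = 3 * 'C(t.+3, 3).
Proof.
move=> hcr ht; set M := (n./2).-1.
have hM : 0 < M by rewrite /M; lia.
have hn : 2 * M + 2 <= n <= 2 * M + 3 by rewrite /M; lia.
have lower s : s < M -> 3 * 'C(s.+3, 3) <= Etrunc n page s.+1.
  by move=> hs; apply: Etrunc_lower_bound; lia.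
have lower_sum : \sum_(0 <= s < M.-1) 3 * 'C(s.+3, 3) <=
                 \sum_(0 <= s < M.-1) Etrunc n page s.+1.
  by apply: leq_sum_nat => s hs; apply: lower; lia.
have lower_M : 3 * 'C(M + 2, 3) <= Etrunc n page M.
  by have := lower M.-1; rewrite prednK // addn2 => /(_ (leqnn M)).
have e_gt0 : 0 < n - 2 * M - 1 by lia.
have := leq_mul (leqnn (n - 2 * M - 1)) lower_M.
have := Etrunc_sum_optimal hM hn hcr => opt le_M.
have eq_sum : \sum_(0 <= s < M.-1) Etrunc n page s.+1 =
              \sum_(0 <= s < M.-1) 3 * 'C(s.+3, 3) by lia.
case: (ltngtP t M.-1) => htM.
- by apply: (eq_from_sum_leq _ eq_sum htM) => s hs; apply: lower; lia.
- by move: htM; rewrite /M; lia.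
- have {}opt : (n - 2 * M - 1) * Etrunc n page M =
               (n - 2 * M - 1) * (3 * 'C(M + 2, 3)) by lia.
  rewrite htM prednK //; rewrite addn2 in opt.
  by apply/eqP; rewrite -(eqn_pmul2l e_gt0) opt.
Qed.

Theorem lemma11 (n : nat) (page : pages) :
  page 1 n = true ->
  cr n page = Z n ->
  forall j : nat, j + 2 <= n./2 ->
  forall k : nat, k + j + 2 <= n./2 ->
  Eleqleq (n - j) page k = 3 * 'C(k + 3, 3).
Proof.
move=> _ hcr j hj k hk; rewrite EleqleqE addn3.
elim: j k hj hk => [|j IH] k hj hk.
  by rewrite subn0; apply: Etrunc_optimal => //; lia.
have hm : n - j = (n - j.+1).+1 by lia.
have := IH k.+1 ltac:(lia) ltac:(lia); rewrite hm (binS k.+3 2).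
have := @Etrunc_step page (n - j.+1) k.+1 ltac:(lia).
have := @Etrunc_lower_bound page k (n - j.+1) ltac:(lia).
lia.
Qed.
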